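(* Let $\mathcal{A}$ be a Desargues affine plane, let $\ell_1=\ell^{OI}$ and $\ell_2$ be lines of $\mathcal{A}$ ($O\neq I$), and let $P_P:\ell_1\to\ell_2$ be a parallel projection. Equip $\ell_1$ with the skew field structure with zero $O$ and unit $I$, and $\ell_2$ with the skew field structure with zero $P_P(O)$ and unit $P_P(I)$. Then for all $A,B\in\ell_1$ with $B\neq O$, \[ P_P(r(A:B))=r(P_P(A):P_P(B)), \] where the ratio on the left is computed in $\ell_1$ and the ratio on the right in $\ell_2$.
   Context: A Desargues affine plane is an incidence structure of points and lines in which any two distinct points lie on exactly one line, through a point not on a line $\ell$ there is exactly one line disjoint from $\ell$ (Playfair), there exist three non-collinear points, and Desargues' axiom holds: if $A,B,C,A',B',C'$ are points such that the pairwise distinct lines $AA',BB',CC'$ are either all parallel or all pass through one point, and $AB\parallel A'B'$, $BC\parallel B'C'$ (with $AB\neq A'B'$, $BC\neq B'C'$, $A\ne C$, $A'\ne C'$), then $AC\parallel A'C'$. Skew field on a line: for distinct points $O,I$ and points $A,B$ on the line $\ell^{OI}$, addition is defined by: choose a point $B_1\notin\ell^{OI}$; let $P_1$ be the intersection of the line through $B_1$ parallel to $\ell^{OI}$ with the line through $A$ parallel to $OB_1$; then $A+B$ is the intersection of $\ell^{OI}$ with the line through $P_1$ parallel to $BB_1$. Multiplication is defined by: choose $B_1\notin\ell^{OI}$; let $P_1$ be the intersection of the line through $A$ parallel to $IB_1$ with the line $OB_1$; then $A\cdot B$ is the intersection of $\ell^{OI}$ with the line through $P_1$ parallel to $BB_1$.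 These operations do not depend on the choice of $B_1$ and make $(\ell^{OI},+,\cdot)$ a skew field with zero $O$ and unit $I$; the same construction applies to any line with any chosen pair of distinct points as zero and unit. $X^{-1}$ denotes the multiplicative inverse. Ratio of two points on a line with chosen zero $O$: $r(A:B)=B^{-1}A$ for $B\neq O$. A parallel projection between lines $\ell_1,\ell_2$ is a map $P_P:\ell_1\to\ell_2$ such that for all $A,B\in\ell_1$ the lines $A\,P_P(A)$ and $B\,P_P(B)$ are parallel (it is a bijection). *)

From Stdlib Require Import Classical ClassicalEpsilon.

Section Generic.
Variables (P L : Type) (inc : P -> L -> Prop).
Definition gpar (l m : L) : Prop := l = m \/ ~ (exists X, inc X l /\ inc X m).
Definition gdisjoint (l m : L) : Prop := ~ (exists X, inc X l /\ inc X m).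
End Generic.
Arguments gpar {P L} inc l m.
Arguments gdisjoint {P L} inc l m.

Record DesarguesAffinePlane := {
  Point : Type;
  Line : Type;
  inc : Point -> Line -> Prop;
  ax_line : forall A B : Point, A <> B ->
      exists l, (inc A l /\ inc B l) /\
                forall m, inc A m /\ inc B m -> m = l;
  ax_playfair : forall (A : Point) (l : Line), ~ inc A l ->
      exists m, (inc A m /\ gdisjoint inc m l) /\
                forall n, inc A n /\ gdisjoint inc n l -> n = m;
  ax_noncol : exists A B C : Point, A <> B /\ B <> C /\ A <> C /\
      ~ (exists l, inc A l /\ inc B l /\ inc C l);
  (* Desargues' axiom (lines named explicitly: a = AA', ab = AB, ...) *)
  ax_desargues : forall (A B C A' B' C' : Point)
      (a b c ab a'b' bc b'c' ac a'c' : Line),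
      A <> A' -> B <> B' -> C <> C' ->
      A <> B -> A' <> B' -> B <> C -> B' <> C' -> A <> C -> A' <> C' ->
      inc A a -> inc A' a -> inc B b -> inc B' b -> inc C c -> inc C' c ->
      inc A ab -> inc B ab -> inc A' a'b' -> inc B' a'b' ->
      inc B bc -> inc C bc -> inc B' b'c' -> inc C' b'c' ->
      inc A ac -> inc C ac -> inc A' a'c' -> inc C' a'c' ->
      a <> b -> b <> c -> a <> c ->
      ((gpar inc a b /\ gpar inc b c /\ gpar inc a c) \/
       (exists S, inc S a /\ inc S b /\ inc S c)) ->
      gpar inc ab a'b' -> ab <> a'b' ->
      gpar inc bc b'c' -> bc <> b'c' ->
      gpar inc ac a'c'
}.

Arguments inc {d} _ _.

Section Plane.
Variable Pi : DesarguesAffinePlane.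
Local Notation Pt := (Point Pi).
Local Notation Ln := (Line Pi).

Definition par (l m : Ln) : Prop := gpar (@inc Pi) l m.

Lemma point_inh : inhabited Pt.
Proof. destruct (ax_noncol Pi) as [A _]. exact (inhabits A). Qed.

Lemma line_inh : inhabited Ln.
Proof.
  destruct (ax_noncol Pi) as [A [B [C [H _]]]].
  destruct (ax_line Pi A B H) as [l _]. exact (inhabits l).
Qed.

Definition the_point (Q : Pt -> Prop) : Pt := epsilon point_inh Q.
Definition the_line (Q : Ln -> Prop) : Ln := epsilon line_inh Q.

Definition line_thru (X Y : Pt) : Ln := the_line (fun l => inc X l /\ inc Y l).
Definition par_thru (X : Pt) (m : Ln) : Ln := the_line (fun n => inc X n /\ par n m).
Definition meet (l m : Ln) : Pt := the_point (fun X => inc X l /\ inc X m).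

Definition add (O I A B : Pt) : Pt :=
  let l := line_thru O I in
  let B1 := the_point (fun X => ~ inc X l) in
  let P1 := meet (par_thru B1 l) (par_thru A (line_thru O B1)) in
  meet l (par_thru P1 (line_thru B B1)).

Definition mul (O I A B : Pt) : Pt :=
  let l := line_thru O I in
  let B1 := the_point (fun X => ~ inc X l) in
  let P1 := meet (par_thru A (line_thru I B1)) (line_thru O B1) in
  meet l (par_thru P1 (line_thru B B1)).

Definition inv (O I X : Pt) : Pt :=
  the_point (fun Y => inc Y (line_thru O I) /\ mul O I X Y = I /\ mul O I Y X = I).

Definition ratio (O I A B : Pt) : Pt := mul O I (inv O I B) A.

Definition parallel_projection (l1 l2 : Ln) (f : Pt -> Pt) : Prop :=
  exists d : Ln, ~ par d l1 /\ ~ par d l2 /\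
    forall A, inc A l1 ->
      inc (f A) l2 /\ exists m, inc A m /\ inc (f A) m /\ par m d.

End Plane.

(* A parallel projection f : l1 -> l2, where l1 = l^{OI}, is multiplicative for the
   skew fields with frames (O, I) and (f O, f I); being injective, it then maps inverses
   to inverses and hence ratios to ratios.

   Multiplicativity is obtained by factoring f through the parallel l3 to l2 through O.
   The projection l1 -> l3 fixes O: taking the auxiliary point B1 of the construction off
   both lines, central Desargues carries the construction of X Y on l1 to that of
   f X f Y on l3, because B1 |-> P1 is a dilation of centre O.  The projection l3 -> l2
   between parallel lines is the restriction of the translation O |-> f O, which by the
   little Desargues theorem preserves the whole construction.  That the product does not
   depend on B1 is again central Desargues. *)

From Stdlib Require Import Classical ClassicalEpsilon.

Section Plane.
Variable Pi : DesarguesAffinePlane.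
Local Notation Pt := (Point Pi).
Local Notation Ln := (Line Pi).
Local Notation line := (line_thru Pi).
Local Notation parl := (par_thru Pi).
Local Notation meet := (meet Pi).
Local Notation par := (par Pi).
Local Notation inc := (@inc Pi).

Lemma the_line_spec (Q : Ln -> Prop) : (exists l, Q l) -> Q (the_line Pi Q).
Proof. apply epsilon_spec. Qed.

Lemma the_point_spec (Q : Pt -> Prop) : (exists X, Q X) -> Q (the_point Pi Q).
Proof. apply epsilon_spec. Qed.

Lemma line_spec X Y : X <> Y -> inc X (line X Y) /\ inc Y (line X Y).
Proof.
  intro XY. apply (the_line_spec (fun l => inc X l /\ inc Y l)).
  destruct (ax_line Pi X Y XY) as [l [Hl _]]. eauto.
Qed.

Lemma line_inl X Y : X <> Y -> inc X (line X Y).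
Proof. apply line_spec. Qed.

Lemma line_inr X Y : X <> Y -> inc Y (line X Y).
Proof. apply line_spec. Qed.

Local Hint Resolve line_inl line_inr : core.

Lemma line_unique X Y l : X <> Y -> inc X l -> inc Y l -> l = line X Y.
Proof.
  intros XY Xl Yl. destruct (ax_line Pi X Y XY) as [l0 [_ U]].
  rewrite (U l), (U (line X Y)); auto.
Qed.

Lemma line_eq X Y l m : X <> Y -> inc X l -> inc Y l -> inc X m -> inc Y m -> l = m.
Proof. intros. rewrite (line_unique X Y l), (line_unique X Y m); auto. Qed.

Lemma point_eq l m X Y : l <> m -> inc X l -> inc X m -> inc Y l -> inc Y m -> X = Y.
Proof.
  intros lm Xl Xm Yl Ym. apply NNPP. intro XY. apply lm. apply (line_eq X Y); auto.
Qed.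

Lemma line_sym X Y : X <> Y -> line X Y = line Y X.
Proof. intro XY. apply line_unique; auto. Qed.

Local Ltac contra_inc :=
  solve [contradiction | match goal with H : ~ inc _ _ |- _ => solve [apply H; auto] end].

Local Ltac distinct :=
  let e := fresh in
  intro e;
  solve [ rewrite e in *; contra_inc | rewrite <- e in *; contra_inc
        | match goal with H : ~ inc _ _ |- _ => solve [apply H; rewrite e; auto] end
        | match goal with H : ~ inc _ _ |- _ => solve [apply H; rewrite <- e; auto] end ].

Lemma line_neq_of_not_inc X Y Z : X <> Y -> ~ inc Z (line X Y) -> line X Z <> line X Y.
Proof. intros XY Z_ e. apply Z_. rewrite <- e. apply line_inr. distinct. Qed.

Lemma par_refl l : par l l.
Proof. left. reflexivity. Qed.

Lemma par_sym l m : par l m -> par m l.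
Proof. intros [e | H]; [left; auto | right]. intros [X [Xm Xl]]. eauto. Qed.

Lemma par_eq l m X : par l m -> inc X l -> inc X m -> l = m.
Proof. intros [e | H] Xl Xm; auto. exfalso. eauto. Qed.

Lemma par_trans l m n : par l m -> par m n -> par l n.
Proof.
  intros lm mn. destruct (classic (exists X, inc X l /\ inc X n)) as [[X [Xl Xn]] | H].
  2: { right. exact H. }
  left. destruct (classic (inc X m)) as [Xm | Xm].
  - rewrite (par_eq l m X), (par_eq m n X); auto.
  - (* l and n are both the Playfair parallel to m through X *)
    destruct (ax_playfair Pi X m Xm) as [k [_ U]].
    assert (disj : forall p, par p m -> inc X p -> gdisjoint inc p m).
    { intros p [e | D] Xp; [subst; contradiction | exact D]. }
    rewrite (U l), (U n); auto using par_sym.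
Qed.

Lemma not_par_of_meet l m X : l <> m -> inc X l -> inc X m -> ~ par l m.
Proof. intros lm Xl Xm p. apply lm. apply (par_eq l m X); auto. Qed.

Lemma not_inc_of_par l m X : par l m -> l <> m -> inc X l -> ~ inc X m.
Proof. intros p lm Xl Xm. apply lm. apply (par_eq l m X); auto. Qed.

Lemma not_par_par a a' b b' : par a a' -> par b b' -> ~ par a b -> ~ par a' b'.
Proof.
  intros aa' bb' ab a'b'. apply ab. apply (par_trans a a'); auto.
  apply (par_trans a' b'); auto using par_sym.
Qed.

Lemma not_inc_of_meet l m O X : l <> m -> inc O l -> inc O m -> inc X l -> X <> O -> ~ inc X m.
Proof. intros lm Ol Om Xl XO Xm. apply XO. apply (point_eq l m); auto. Qed.

Lemma par_thru_spec X m : inc X (parl X m) /\ par (parl X m) m.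
Proof.
  apply (the_line_spec (fun n => inc X n /\ par n m)).
  destruct (classic (inc X m)) as [Xm | Xm].
  - exists m. auto using par_refl.
  - destruct (ax_playfair Pi X m Xm) as [k [[Xk D] _]]. exists k. split; [auto | right; exact D].
Qed.

Lemma par_thru_inc X m : inc X (parl X m).
Proof. apply par_thru_spec. Qed.

Lemma par_thru_par X m : par (parl X m) m.
Proof. apply par_thru_spec. Qed.

Local Hint Resolve par_thru_inc par_thru_par par_refl : core.

Lemma par_thru_unique X m n : inc X n -> par n m -> n = parl X m.
Proof.
  intros Xn nm. apply (par_eq _ _ X); auto. apply (par_trans n m); auto using par_sym.
Qed.

Lemma par_thru_self X m : inc X m -> parl X m = m.
Proof. intro Xm. symmetry. apply par_thru_unique; auto. Qed.

Lemma par_thru_compat X m m' : par m m' -> parl X m = parl X m'.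
Proof. intro mm'. apply par_thru_unique; auto. apply (par_trans _ m); auto. Qed.

Lemma par_thru_line X Y m : inc Y (parl X m) -> X <> Y -> parl X m = line X Y.
Proof. intros Y_ XY. apply line_unique; auto. Qed.

Lemma line_par_of_par_thru X Y m : inc Y (parl X m) -> X <> Y -> par (line X Y) m.
Proof. intros. rewrite <- (par_thru_line X Y m); auto. Qed.

Lemma par_thru_of_line_par X Y m : X <> Y -> par (line X Y) m -> inc Y (parl X m).
Proof. intros XY p. rewrite <- (par_thru_unique X m (line X Y)); auto. Qed.

Lemma par_thru_same X Y m : inc Y (parl X m) -> parl Y m = parl X m.
Proof. intro Y_. symmetry. apply par_thru_unique; auto. Qed.

Lemma par_thru_sym X Y m : inc Y (parl X m) -> inc X (parl Y m).
Proof. intro Y_. rewrite (par_thru_same X Y m Y_). auto. Qed.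

Lemma par_thru_trans X Y Z m : inc Y (parl X m) -> inc Z (parl X m) -> inc Z (parl Y m).
Proof. intros Y_ Z_. rewrite (par_thru_same X Y m Y_). exact Z_. Qed.

Lemma meet_spec l m : ~ par l m -> inc (meet l m) l /\ inc (meet l m) m.
Proof.
  intro lm. apply (the_point_spec (fun X => inc X l /\ inc X m)).
  apply NNPP. intro H. apply lm. right. exact H.
Qed.

Lemma meet_unique l m X : ~ par l m -> inc X l -> inc X m -> X = meet l m.
Proof.
  intros lm Xl Xm. destruct (meet_spec l m lm).
  apply (point_eq l m); auto. intro e. subst. auto.
Qed.

Lemma exists_not_inc l : exists X : Pt, ~ inc X l.
Proof.
  destruct (ax_noncol Pi) as [A [B [C [_ [_ [_ H]]]]]].
  apply NNPP. intro K. apply H. exists l.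
  repeat split; apply NNPP; intro Hn; apply K; eauto.
Qed.

Lemma exists_not_inc2 l m P Q : ~ par l m -> inc P l -> ~ inc P m -> inc Q m -> ~ inc Q l ->
  exists R, ~ inc R l /\ ~ inc R m.
Proof.
  (* the fourth vertex of the parallelogram on P, the common point and Q *)
  intros lm Pl Pm Qm Ql.
  assert (np : ~ par (parl P m) (parl Q l)).
  { refine (not_par_par m _ l _ _ _ _); try (apply par_sym; auto).
    intro p. apply lm, par_sym, p. }
  destruct (meet_spec _ _ np) as [R1 R2].
  exists (meet (parl P m) (parl Q l)). split.
  - intro R3. apply Ql. rewrite <- (par_eq (parl Q l) l _ (par_thru_par Q l) R2 R3). auto.
  - intro R3. apply Pm. rewrite <- (par_eq (parl P m) m _ (par_thru_par P m) R1 R3). auto.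
Qed.

Lemma desargues (A B C A' B' C' : Pt) :
  A <> A' -> B <> B' -> C <> C' -> A <> B -> A' <> B' -> B <> C -> B' <> C' ->
  A <> C -> A' <> C' ->
  line A A' <> line B B' -> line B B' <> line C C' -> line A A' <> line C C' ->
  (par (line A A') (line B B') /\ par (line B B') (line C C') /\ par (line A A') (line C C') \/
   exists S, inc S (line A A') /\ inc S (line B B') /\ inc S (line C C')) ->
  par (line A B) (line A' B') -> line A B <> line A' B' ->
  par (line B C) (line B' C') -> line B C <> line B' C' ->
  par (line A C) (line A' C').
Proof.
  intros. apply (ax_desargues Pi A B C A' B' C' (line A A') (line B B') (line C C')
    (line A B) (line A' B') (line B C) (line B' C') (line A C) (line A' C')); auto.
Qed.

Lemma par_lines_eq A B B' b : inc B b -> inc B' b -> ~ inc A b ->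
  par (line A B) (line A B') -> B = B'.
Proof.
  intros Bb B'b Ab p.
  assert (AB : A <> B) by distinct.
  assert (AB' : A <> B') by distinct.
  assert (E : line A B = line A B') by (apply (par_eq _ _ A p); auto).
  apply (point_eq (line A B) b); auto.
  - intro e. apply Ab. rewrite <- e. auto.
  - rewrite E. auto.
Qed.

Lemma desargues_central O a b c A B C A' B' C' :
  a <> b -> b <> c -> a <> c -> inc O a -> inc O b -> inc O c ->
  inc A a -> inc A' a -> inc B b -> inc B' b -> inc C c -> inc C' c ->
  A <> O -> A' <> O -> B <> O -> B' <> O -> C <> O -> C' <> O ->
  par (line A B) (line A' B') -> par (line B C) (line B' C') -> par (line A C) (line A' C').
Proof.
  intros ab bc ac Oa Ob Oc Aa A'a Bb B'b Cc C'c AO A'O BO B'O CO C'O pAB pBC.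
  assert (off : forall x y X, x <> y -> inc O x -> inc O y -> inc X x -> X <> O -> ~ inc X y)
    by (intros; apply (not_inc_of_meet x y O X); auto).
  assert (nAb := off a b A ab Oa Ob Aa AO). assert (nA'b := off a b A' ab Oa Ob A'a A'O).
  assert (nBc := off b c B bc Ob Oc Bb BO). assert (nB'c := off b c B' bc Ob Oc B'b B'O).
  assert (nAc := off a c A ac Oa Oc Aa AO). assert (nA'c := off a c A' ac Oa Oc A'a A'O).
  assert (nBa := off b a B (not_eq_sym ab) Ob Oa Bb BO).
  assert (nCb := off c b C (not_eq_sym bc) Oc Ob Cc CO).
  destruct (classic (A = A')) as [<- | AA'].
  { (* then B = B' and C = C': there is nothing to prove *)
    assert (e : B = B') by (apply (par_lines_eq A B B' b); auto). subst B'.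
    assert (e : C = C') by (apply (par_lines_eq B C C' c); auto). subst C'.
    apply par_refl. }
  assert (BB' : B <> B').
  { intros <-. apply AA'. apply (par_lines_eq B A A' a); auto.
    rewrite (line_sym B A), (line_sym B A'); auto; distinct. }
  assert (CC' : C <> C').
  { intros <-. apply BB'. apply (par_lines_eq C B B' b); auto.
    rewrite (line_sym C B), (line_sym C B'); auto; distinct. }
  assert (Ea : a = line A A') by (apply line_unique; auto).
  assert (Eb : b = line B B') by (apply line_unique; auto).
  assert (Ec : c = line C C') by (apply line_unique; auto).
  subst a b c. apply (desargues A B C A' B' C'); auto; try distinct.
  - right. exists O. auto.
  - intro e. apply nBa. assert (A <> B) by distinct. assert (A' <> B') by distinct.
    rewrite <- (line_unique A A' (line A B)); auto. rewrite e. auto.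
  - intro e. apply nCb. assert (B <> C) by distinct. assert (B' <> C') by distinct.
    rewrite <- (line_unique B B' (line B C)); auto. rewrite e. auto.
Qed.

(* With B1 as the auxiliary point of the definition of [mul], [mul_pivot O I B1 A] is the
   point P1 and [mul_with O I B1 A B] the product A * B; [mul] fixes one such B1. *)
Definition mul_pivot (O I B1 A : Pt) : Pt := meet (parl A (line I B1)) (line O B1).
Definition mul_with (O I B1 A B : Pt) : Pt :=
  meet (line O I) (parl (mul_pivot O I B1 A) (line B B1)).

Lemma mul_eq_mul_with O I A B :
  mul Pi O I A B = mul_with O I (the_point Pi (fun X => ~ inc X (line O I))) A B.
Proof. reflexivity. Qed.

Section Multiplication.
Variables O I : Pt.
Hypothesis OI : O <> I.
Local Notation l := (line O I).
Local Notation pivot := (mul_pivot O I).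
Local Notation mulw := (mul_with O I).

Lemma I_not_inc_line_O B1 : ~ inc B1 l -> ~ inc I (line O B1).
Proof.
  intros B1_ I_. assert (OB1 : O <> B1) by distinct.
  apply (line_neq_of_not_inc O I B1 OI B1_). apply line_unique; auto.
Qed.

Lemma not_inc_line_O_of_inc X B1 : ~ inc B1 l -> inc X l -> X <> O -> ~ inc X (line O B1).
Proof.
  intros B1_ X_ XO. assert (OB1 : O <> B1) by distinct.
  apply (not_inc_of_meet l (line O B1) O X); auto.
  apply not_eq_sym, line_neq_of_not_inc; auto.
Qed.

Lemma not_inc_of_inc_line_O X B1 : ~ inc B1 l -> inc X (line O B1) -> X <> O -> ~ inc X l.
Proof.
  intros B1_ X_ XO. assert (OB1 : O <> B1) by distinct.
  apply (not_inc_of_meet (line O B1) l O X); auto. apply line_neq_of_not_inc; auto.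
Qed.

Lemma line_not_par X B1 : inc X l -> ~ inc B1 l -> ~ par (line X B1) l.
Proof.
  intros X_ B1_. assert (XB1 : X <> B1) by distinct.
  apply (not_par_of_meet _ _ X); auto. intro e. apply B1_. rewrite <- e. auto.
Qed.

Lemma pivot_not_par B1 A : ~ inc B1 l -> ~ par (parl A (line I B1)) (line O B1).
Proof.
  intro B1_. assert (IB1 : I <> B1) by distinct. assert (OB1 : O <> B1) by distinct.
  refine (not_par_par (line I B1) _ (line O B1) _ _ _ _); auto using par_sym.
  apply (not_par_of_meet _ _ B1); auto.
  intro e. apply (I_not_inc_line_O B1 B1_). rewrite <- e. auto.
Qed.

Lemma pivot_inc_dir B1 A : ~ inc B1 l -> inc (pivot B1 A) (parl A (line I B1)).
Proof. intro B1_. apply (meet_spec _ _ (pivot_not_par B1 A B1_)). Qed.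

Lemma pivot_inc_line B1 A : ~ inc B1 l -> inc (pivot B1 A) (line O B1).
Proof. intro B1_. apply (meet_spec _ _ (pivot_not_par B1 A B1_)). Qed.

Lemma pivot_unique B1 A P : ~ inc B1 l ->
  inc P (line O B1) -> inc P (parl A (line I B1)) -> P = pivot B1 A.
Proof. intros. apply meet_unique; auto. apply pivot_not_par; auto. Qed.

Lemma mul_with_not_par B1 B P : ~ inc B1 l -> inc B l -> ~ par l (parl P (line B B1)).
Proof.
  intros B1_ B_. refine (not_par_par l _ (line B B1) _ _ _ _); auto using par_sym.
  intro p. apply (line_not_par B B1); auto using par_sym.
Qed.

Lemma mul_with_inc B1 A B : ~ inc B1 l -> inc B l -> inc (mulw B1 A B) l.
Proof. intros B1_ B_. apply (meet_spec _ _ (mul_with_not_par B1 B _ B1_ B_)). Qed.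

Lemma mul_with_inc_dir B1 A B : ~ inc B1 l -> inc B l ->
  inc (mulw B1 A B) (parl (pivot B1 A) (line B B1)).
Proof. intros B1_ B_. apply (meet_spec _ _ (mul_with_not_par B1 B _ B1_ B_)). Qed.

Lemma mul_with_unique B1 A B P C : ~ inc B1 l -> inc B l ->
  inc P (line O B1) -> inc P (parl A (line I B1)) -> inc C l -> inc C (parl P (line B B1)) ->
  mulw B1 A B = C.
Proof.
  intros B1_ B_ P1 P2 C1 C2. unfold mul_with. rewrite <- (pivot_unique B1 A P); auto.
  symmetry. apply meet_unique; auto. apply mul_with_not_par; auto.
Qed.

Lemma mul_with_0l B1 B : ~ inc B1 l -> inc B l -> mulw B1 O B = O.
Proof.
  intros B1_ B_. assert (OB1 : O <> B1) by distinct.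
  apply (mul_with_unique B1 O B O O); auto.
Qed.

Lemma mul_with_0r B1 A : ~ inc B1 l -> mulw B1 A O = O.
Proof.
  intro B1_. assert (OB1 : O <> B1) by distinct.
  apply (mul_with_unique B1 A O (pivot B1 A) O); auto using pivot_inc_line, pivot_inc_dir.
  rewrite par_thru_self; auto using pivot_inc_line.
Qed.

Lemma pivot_neq_O B1 A : ~ inc B1 l -> inc A l -> A <> O -> pivot B1 A <> O.
Proof.
  intros B1_ A_ AO e. pose proof (pivot_inc_dir B1 A B1_) as H. rewrite e in H.
  assert (IB1 : I <> B1) by distinct.
  assert (E : parl A (line I B1) = l)
    by (rewrite (par_thru_line A O); auto; apply (line_eq A O); auto).
  apply B1_. rewrite <- (par_eq (line I B1) l I); auto. rewrite <- E. auto using par_sym.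
Qed.

Lemma pivot_not_inc B1 A : ~ inc B1 l -> inc A l -> A <> O -> ~ inc (pivot B1 A) l.
Proof.
  intros. apply (not_inc_of_inc_line_O _ B1); auto using pivot_inc_line, pivot_neq_O.
Qed.

Lemma mul_with_neq_O B1 A B : ~ inc B1 l -> inc A l -> A <> O -> inc B l -> B <> O ->
  mulw B1 A B <> O.
Proof.
  intros B1_ A_ AO B_ BO e. pose proof (mul_with_inc_dir B1 A B B1_ B_) as H. rewrite e in H.
  assert (OB1 : O <> B1) by distinct. assert (BB1 : B <> B1) by distinct.
  assert (E : parl (pivot B1 A) (line B B1) = line O B1).
  { rewrite (par_thru_line _ O); auto using pivot_neq_O.
    apply (line_eq (pivot B1 A) O); auto using pivot_neq_O, pivot_inc_line. }
  apply (not_inc_line_O_of_inc B B1); auto.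
  rewrite (par_eq (line O B1) (line B B1) B1); auto. rewrite <- E. auto.
Qed.

Lemma pivot_inj A B C : inc A l -> A <> O -> ~ inc B l -> ~ inc C l ->
  pivot B A = pivot C A -> B = C.
Proof.
  intros A_ AO B_ C_ e. set (P := pivot B A) in e.
  assert (PO : P <> O) by (apply pivot_neq_O; auto).
  assert (AP : A <> P) by (intro e'; apply (pivot_not_inc B A); auto; fold P; rewrite <- e'; auto).
  assert (IB : I <> B) by distinct. assert (IC : I <> C) by distinct.
  assert (OB : O <> B) by distinct. assert (OC : O <> C) by distinct.
  assert (EO : line O B = line O C).
  { apply (line_eq O P); auto. apply pivot_inc_line; auto. rewrite e. apply pivot_inc_line; auto. }
  assert (EI : line I B = line I C).
  { apply (par_eq _ _ I); auto.
    apply (par_trans _ (parl A (line I B))); auto using par_sym.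
    rewrite (par_thru_line A P), e, <- (par_thru_line A (pivot C A) (line I C));
      auto using pivot_inc_dir.
    - rewrite <- e. auto.
    - apply pivot_inc_dir; auto. }
  apply (point_eq (line I B) (line O B)); auto.
  - intro e'. apply (I_not_inc_line_O B B_). rewrite <- e'. auto.
  - rewrite EI. auto.
  - rewrite EO. auto.
Qed.

Lemma pivot_par A B C : inc A l -> A <> O -> ~ inc B l -> ~ inc C l -> B <> C ->
  par (line B C) (line (pivot B A) (pivot C A)).
Proof.
  intros A_ AO B_ C_ BC.
  assert (PBC : pivot B A <> pivot C A) by (intro e; apply BC; apply (pivot_inj A); auto).
  pose proof (pivot_inc_dir B A B_) as B1. pose proof (pivot_inc_line B A B_) as B2.
  pose proof (pivot_inc_dir C A C_) as C1. pose proof (pivot_inc_line C A C_) as C2.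
  pose proof (pivot_not_inc B A B_ A_ AO) as Bl. pose proof (pivot_not_inc C A C_ A_ AO) as Cl.
  assert (OB : O <> B) by distinct. assert (OC : O <> C) by distinct.
  assert (IB : I <> B) by distinct. assert (IC : I <> C) by distinct.
  destruct (classic (inc C (line O B))) as [COB | COB].
  { assert (E : line O C = line O B) by (symmetry; apply line_unique; auto).
    rewrite E in C2.
    rewrite <- (line_unique B C (line O B)), <- (line_unique (pivot B A) (pivot C A) (line O B));
      auto. }
  (* triangles B I C and (pivot B A) A (pivot C A) are in perspective from O *)
  apply (desargues_central O (line O B) l (line O C) B I C (pivot B A) A (pivot C A));
    auto using pivot_neq_O.
  - apply line_neq_of_not_inc; auto.
  - apply not_eq_sym, line_neq_of_not_inc; auto.
  - intro e. apply COB. rewrite e. auto.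
  - rewrite (line_sym B I), (line_sym (pivot B A) A) by distinct.
    rewrite <- (par_thru_line A (pivot B A) (line I B)); auto using par_sym. distinct.
  - rewrite <- (par_thru_line A (pivot C A) (line I C)); auto using par_sym. distinct.
Qed.

Lemma mul_with_indep_off B1 B2 A B : ~ inc B1 l -> ~ inc B2 l -> ~ inc B2 (line O B1) ->
  inc A l -> inc B l -> mulw B1 A B = mulw B2 A B.
Proof.
  intros B1_ B2_ B12 A_ B_.
  destruct (classic (A = O)) as [-> | AO]; [rewrite !mul_with_0l; auto|].
  destruct (classic (B = O)) as [-> | BO]; [rewrite !mul_with_0r; auto|].
  set (C := mulw B1 A B).
  assert (C_ : inc C l) by (apply mul_with_inc; auto).
  assert (C1 : inc C (parl (pivot B1 A) (line B B1))) by (apply mul_with_inc_dir; auto).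
  assert (CO : C <> O) by (apply mul_with_neq_O; auto).
  assert (OB1 : O <> B1) by distinct. assert (OB2 : O <> B2) by distinct.
  assert (B1B2 : B1 <> B2) by distinct.
  assert (P1C : pivot B1 A <> C) by (intro e; apply (pivot_not_inc B1 A); auto; rewrite e; auto).
  assert (P2C : pivot B2 A <> C) by (intro e; apply (pivot_not_inc B2 A); auto; rewrite e; auto).
  symmetry. apply (mul_with_unique B2 A B (pivot B2 A)); auto using pivot_inc_line, pivot_inc_dir.
  apply par_thru_of_line_par; auto. rewrite (line_sym _ C); auto. apply par_sym.
  (* triangles B B1 B2 and C (pivot B1 A) (pivot B2 A) are in perspective from O *)
  apply (desargues_central O l (line O B1) (line O B2) B B1 B2 C (pivot B1 A) (pivot B2 A));
    auto using pivot_inc_line, pivot_neq_O, pivot_par.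
  - apply not_eq_sym, line_neq_of_not_inc; auto.
  - intro e. apply B12. rewrite e. auto.
  - apply not_eq_sym, line_neq_of_not_inc; auto.
  - rewrite (line_sym C); auto. apply par_sym, line_par_of_par_thru; auto.
Qed.

Lemma mul_with_indep B1 B2 A B : ~ inc B1 l -> ~ inc B2 l ->
  inc A l -> inc B l -> mulw B1 A B = mulw B2 A B.
Proof.
  intros B1_ B2_ A_ B_.
  destruct (classic (inc B2 (line O B1))) as [B12 | B12]; [|apply mul_with_indep_off; auto].
  (* pass through a point R off both l and the line O B1 *)
  assert (OB1 : O <> B1) by distinct. assert (OB2 : O <> B2) by distinct.
  assert (np : ~ par l (line O B1)).
  { apply (not_par_of_meet _ _ O); auto. apply not_eq_sym, line_neq_of_not_inc; auto. }
  destruct (exists_not_inc2 _ _ I B1 np) as [R [R1 R2]]; auto using I_not_inc_line_O.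
  assert (OR : O <> R) by distinct.
  rewrite (mul_with_indep_off B1 R A B); auto. apply mul_with_indep_off; auto.
  intro R3. apply R2. rewrite (line_eq O B2 (line O B1) (line O R)); auto.
Qed.

Lemma mul_with_injr B1 A Y Y' : ~ inc B1 l -> inc A l -> A <> O ->
  inc Y l -> inc Y' l -> mulw B1 A Y = mulw B1 A Y' -> Y = Y'.
Proof.
  intros B1_ A_ AO Y_ Y'_ E.
  pose proof (mul_with_inc_dir B1 A Y B1_ Y_) as H.
  pose proof (mul_with_inc_dir B1 A Y' B1_ Y'_) as H'.
  rewrite <- E in H'. set (C := mulw B1 A Y) in *. set (P := pivot B1 A) in *.
  assert (PC : P <> C).
  { intro e. apply (pivot_not_inc B1 A); auto. fold P. rewrite e. apply mul_with_inc; auto. }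
  assert (YB1 : Y <> B1) by distinct. assert (Y'B1 : Y' <> B1) by distinct.
  assert (E1 : line Y B1 = line Y' B1).
  { apply (par_eq _ _ B1); auto.
    apply (par_trans _ (parl P (line Y B1))); auto using par_sym.
    rewrite (par_thru_line P C), <- (par_thru_line P C (line Y' B1)); auto. }
  apply (point_eq (line Y B1) l); auto.
  - intro e. apply B1_. rewrite <- e. auto.
  - rewrite E1. auto.
Qed.

Lemma mul_with_inv_exists B1 A : ~ inc B1 l -> inc A l -> A <> O ->
  exists Y, inc Y l /\ mulw B1 A Y = I /\ mulw B1 Y A = I.
Proof.
  intros B1_ A_ AO. set (D := pivot B1 A).
  assert (D1 : inc D (parl A (line I B1))) by (apply pivot_inc_dir; auto).
  assert (D2 : inc D (line O B1)) by (apply pivot_inc_line; auto).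
  assert (DO : D <> O) by (apply pivot_neq_O; auto).
  assert (D_ : ~ inc D l) by (apply pivot_not_inc; auto).
  assert (ID : I <> D) by distinct. assert (AD : A <> D) by distinct.
  assert (np : ~ par l (parl B1 (line I D))).
  { refine (not_par_par l _ (line I D) _ _ _ _); auto using par_sym.
    intro p. apply (line_not_par I D); auto using par_sym. }
  destruct (meet_spec _ _ np) as [Y1 Y2].
  set (Y := meet l (parl B1 (line I D))) in *.
  assert (YB1 : Y <> B1) by distinct.
  exists Y. split; [|split]; auto.
  - (* the line through D parallel to Y B1 is D I itself *)
    apply (mul_with_unique B1 A Y D I); auto.
    rewrite (line_sym Y B1), <- (par_thru_line B1 Y (line I D)); auto.
    rewrite (par_thru_compat D _ (line I D)), par_thru_self; auto.
  - (* computed with D as auxiliary point, the roles of B1 and I are exchanged *)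
    assert (OD : O <> D) by auto. assert (OB1 : O <> B1) by distinct.
    assert (E : line O D = line O B1) by (symmetry; apply line_unique; auto).
    rewrite (mul_with_indep B1 D); auto.
    apply (mul_with_unique D Y A B1 I); auto.
    + rewrite E. auto.
    + apply par_thru_sym; auto.
    + rewrite <- (par_thru_line A D (line I B1)); auto.
      assert (IB1 : I <> B1) by distinct.
      rewrite (par_thru_compat B1 _ (line I B1)), par_thru_self; auto.
Qed.

End Multiplication.

(* The image of P under the translation O |-> O'; it is meaningful only off the line O O'. *)
Definition translate (O O' P : Pt) : Pt := meet (parl P (line O O')) (parl O' (line O P)).

Section Translation.
Variables O O' : Pt.
Hypothesis OO' : O <> O'.
Local Notation axis := (line O O').
Local Notation t := (translate O O').

Lemma par_thru_neq_axis P : ~ inc P axis -> parl P axis <> axis.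
Proof. intros P_ e. apply P_. rewrite <- e. auto. Qed.

Lemma translate_not_par P : ~ inc P axis -> ~ par (parl P axis) (parl O' (line O P)).
Proof.
  intro P_. refine (not_par_par axis _ (line O P) _ _ _ _); try (apply par_sym; auto).
  apply (not_par_of_meet _ _ O); auto. apply not_eq_sym, line_neq_of_not_inc; auto.
  apply line_inl. distinct.
Qed.

Lemma translate_inc_dir P : ~ inc P axis -> inc (t P) (parl P axis).
Proof. intro P_. apply (meet_spec _ _ (translate_not_par P P_)). Qed.

Lemma translate_inc_image P : ~ inc P axis -> inc (t P) (parl O' (line O P)).
Proof. intro P_. apply (meet_spec _ _ (translate_not_par P P_)). Qed.

Lemma translate_not_inc P : ~ inc P axis -> ~ inc (t P) axis.
Proof.
  intro P_. apply (not_inc_of_par (parl P axis)); auto.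
  apply par_thru_neq_axis; auto. apply translate_inc_dir; auto.
Qed.

Lemma translate_neq P : ~ inc P axis -> t P <> P.
Proof.
  intros P_ e. apply (line_neq_of_not_inc O O' P OO' P_).
  assert (OP : O <> P) by distinct.
  pose proof (translate_inc_image P P_) as H. rewrite e in H.
  assert (E : parl O' (line O P) = line O P) by (apply (par_eq _ _ P); auto).
  apply line_unique; auto. rewrite <- E. auto.
Qed.

Lemma translate_neq_O' P : ~ inc P axis -> O' <> t P.
Proof. intros P_ e. apply (translate_not_inc P P_). rewrite <- e. auto. Qed.

Lemma translate_image_line P : ~ inc P axis -> line O' (t P) = parl O' (line O P).
Proof.
  intro P_. symmetry. apply par_thru_line; auto using translate_inc_image, translate_neq_O'.
Qed.

Lemma translate_inj B C : ~ inc B axis -> ~ inc C axis -> t B = t C -> B = C.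
Proof.
  intros B_ C_ e.
  assert (OB : O <> B) by distinct. assert (OC : O <> C) by distinct.
  assert (dir : parl C axis = parl B axis).
  { rewrite <- (par_thru_same C (t C)), <- e, (par_thru_same B (t B));
      auto using translate_inc_dir. }
  assert (same : line O B = line O C).
  { apply (par_eq _ _ O); auto.
    apply (par_trans _ (parl O' (line O B))); [apply par_sym; auto|].
    rewrite <- translate_image_line, e, translate_image_line; auto. }
  apply (point_eq (line O B) (parl B axis)); auto.
  - intro e'. apply (par_thru_neq_axis B B_). apply (par_eq _ _ O); auto.
    rewrite <- e'. auto.
  - rewrite same. auto.
  - rewrite <- dir. auto.
Qed.

Lemma translate_par_generic B C : ~ inc B axis -> ~ inc C axis ->
  ~ inc C (parl B axis) -> ~ inc C (line O B) -> par (line B C) (line (t B) (t C)).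
Proof.
  (* triangles B O C and (t B) O' (t C) are in perspective from the direction of the axis *)
  intros B_ C_ CB COB.
  assert (BC : B <> C) by (intro e; apply CB; rewrite <- e; auto).
  assert (tBC : t B <> t C) by (intro e; apply BC, translate_inj; auto).
  assert (OB : O <> B) by distinct. assert (OC : O <> C) by distinct.
  assert (dB : line B (t B) = parl B axis).
  { symmetry. apply par_thru_line; auto using translate_inc_dir.
    apply not_eq_sym, translate_neq; auto. }
  assert (dC : line C (t C) = parl C axis).
  { symmetry. apply par_thru_line; auto using translate_inc_dir.
    apply not_eq_sym, translate_neq; auto. }
  assert (dBC : parl B axis <> parl C axis) by (intro e; apply CB; rewrite e; auto).
  assert (Onot : forall X, ~ inc X axis -> parl O' (line O X) <> line O X).
  { intros X X_ e. apply (line_neq_of_not_inc O O' X OO' X_). apply (line_eq O O'); auto.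
    - apply line_inl. distinct.
    - rewrite <- e. auto. }
  pose proof (translate_neq_O' B B_). pose proof (translate_neq_O' C C_).
  apply (desargues B O C (t B) O' (t C)); auto; try distinct.
  - apply not_eq_sym, translate_neq; auto.
  - apply not_eq_sym, translate_neq; auto.
  - rewrite dB. apply par_thru_neq_axis; auto.
  - rewrite dC. apply not_eq_sym, par_thru_neq_axis; auto.
  - rewrite dB, dC. auto.
  - left. rewrite dB, dC. repeat split; auto using par_sym.
    apply (par_trans _ axis); auto using par_sym.
  - rewrite (line_sym (t B) O'), translate_image_line, (line_sym B O); auto using par_sym.
  - rewrite (line_sym (t B) O'), translate_image_line, (line_sym B O); auto.
    apply not_eq_sym, Onot; auto.
  - rewrite translate_image_line; auto using par_sym.
  - rewrite translate_image_line; auto. apply not_eq_sym, Onot; auto.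
Qed.

Lemma translate_par B C : ~ inc B axis -> ~ inc C axis -> B <> C ->
  par (line B C) (line (t B) (t C)).
Proof.
  intros B_ C_ BC.
  assert (tBC : t B <> t C) by (intro e; apply BC, translate_inj; auto).
  assert (OB : O <> B) by distinct.
  destruct (classic (inc C (parl B axis))) as [CB | CB].
  { rewrite <- (par_thru_line B C axis), <- (line_unique (t B) (t C) (parl B axis));
      auto using translate_inc_dir.
    rewrite <- (par_thru_same B C); auto using translate_inc_dir. }
  destruct (classic (inc C (line O B))) as [COB | COB]; [|apply translate_par_generic; auto].
  assert (E : line O C = line O B) by (symmetry; apply line_unique; auto; distinct).
  pose proof (translate_inc_image C C_) as C2. rewrite E in C2.
  rewrite <- (line_unique B C (line O B)), <- (line_unique (t B) (t C) (parl O' (line O B)));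
    auto using par_sym, translate_inc_image.
Qed.

Lemma translate_not_inc_par P Q : ~ inc P axis -> ~ inc Q axis -> ~ inc Q (line O P) ->
  ~ inc (t Q) (parl O' (line O P)).
Proof.
  intros P_ Q_ QP H. assert (OP : O <> P) by distinct. assert (OQ : O <> Q) by distinct.
  apply QP. rewrite (par_eq (line O P) (line O Q) O); auto.
  apply (par_trans _ (parl O' (line O P))); auto using par_sym.
  rewrite (par_thru_line O' (t Q)), translate_image_line; auto using translate_neq_O'.
Qed.

Lemma translate_mul_with I Q X Y : ~ inc I axis -> ~ inc Q axis -> ~ inc Q (line O I) ->
  inc X (line O I) -> X <> O -> inc Y (line O I) -> Y <> O ->
  t (mul_with O I Q X Y) = mul_with O' (t I) (t Q) (t X) (t Y).
Proof.
  intros I_ Q_ QI X_ XO Y_ YO.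
  assert (OI : O <> I) by distinct. assert (OQ : O <> Q) by distinct.
  assert (off : forall P, inc P (line O I) -> P <> O -> ~ inc P axis).
  { intros P P_ PO. apply (not_inc_of_meet (line O I) axis O); auto.
    apply line_neq_of_not_inc; auto. }
  assert (image : forall P, inc P (line O I) -> P <> O -> inc (t P) (line O' (t I))).
  { intros P P_ PO. rewrite translate_image_line, (line_unique O P (line O I));
      auto using translate_inc_image, not_eq_sym. }
  set (C := mul_with O I Q X Y). set (Q1 := mul_pivot O I Q X).
  assert (C_ : inc C (line O I)) by (apply mul_with_inc; auto).
  assert (CO : C <> O) by (apply mul_with_neq_O; auto).
  assert (Q1_ : inc Q1 (line O Q)) by (apply pivot_inc_line; auto).
  assert (Q1O : Q1 <> O) by (apply pivot_neq_O; auto).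
  assert (Q1l : ~ inc Q1 (line O I)) by (apply pivot_not_inc; auto).
  assert (Q1a : ~ inc Q1 axis).
  { apply (not_inc_of_meet (line O Q) axis O); auto. apply line_neq_of_not_inc; auto. }
  symmetry. apply (mul_with_unique O' (t I) (translate_neq_O' I I_) (t Q) (t X) (t Y) (t Q1) (t C));
    auto using image.
  - rewrite translate_image_line; auto. apply translate_not_inc_par; auto.
  - rewrite translate_image_line, (line_unique O Q1 (line O Q)); auto using translate_inc_image.
  - apply par_thru_of_line_par.
    + intro e. apply Q1l. rewrite <- (translate_inj X Q1); auto.
    + apply (par_trans _ (line X Q1)); [apply par_sym, translate_par; auto; distinct|].
      apply (par_trans _ (line I Q)); [|apply translate_par; auto; distinct].
      apply line_par_of_par_thru; [apply pivot_inc_dir; auto | distinct].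
  - apply par_thru_of_line_par.
    + intro e. apply Q1l. rewrite (translate_inj Q1 C); auto.
    + apply (par_trans _ (line Q1 C)); [apply par_sym, translate_par; auto; distinct|].
      apply (par_trans _ (line Y Q)); [|apply translate_par; auto; distinct].
      apply line_par_of_par_thru; [apply mul_with_inc_dir; auto | distinct].
Qed.

End Translation.

Lemma the_point_not_inc l : ~ inc (the_point Pi (fun X => ~ inc X l)) l.
Proof. apply (the_point_spec (fun X => ~ inc X l)), exists_not_inc. Qed.

Section Product.
Variables O I : Pt.
Hypothesis OI : O <> I.
Local Notation l := (line O I).

Lemma mul_eq_mul_with_any Q A B : ~ inc Q l -> inc A l -> inc B l ->
  mul Pi O I A B = mul_with O I Q A B.
Proof. intros. rewrite mul_eq_mul_with. apply mul_with_indep; auto using the_point_not_inc. Qed.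

Lemma mul_inc A B : inc B l -> inc (mul Pi O I A B) l.
Proof. intro. apply mul_with_inc; auto using the_point_not_inc. Qed.

Lemma mul_0l B : inc B l -> mul Pi O I O B = O.
Proof. intro. apply mul_with_0l; auto using the_point_not_inc. Qed.

Lemma mul_0r A : mul Pi O I A O = O.
Proof. apply mul_with_0r; auto using the_point_not_inc. Qed.

Lemma mul_injr A Y Y' : inc A l -> A <> O -> inc Y l -> inc Y' l ->
  mul Pi O I A Y = mul Pi O I A Y' -> Y = Y'.
Proof.
  rewrite !mul_eq_mul_with. apply mul_with_injr; auto using the_point_not_inc.
Qed.

Lemma inv_spec B : inc B l -> B <> O ->
  inc (inv Pi O I B) l /\ mul Pi O I B (inv Pi O I B) = I /\ mul Pi O I (inv Pi O I B) B = I.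
Proof.
  intros B_ BO.
  apply (the_point_spec (fun Y => inc Y l /\ mul Pi O I B Y = I /\ mul Pi O I Y B = I)).
  apply mul_with_inv_exists; auto using the_point_not_inc.
Qed.

Lemma inv_unique B Y : inc B l -> B <> O -> inc Y l -> mul Pi O I B Y = I -> Y = inv Pi O I B.
Proof.
  intros B_ BO Y_ E. destruct (inv_spec B B_ BO) as [Bi_ [BBi _]].
  apply (mul_injr B); congruence.
Qed.

End Product.

Definition projects (d l1 l2 : Ln) (P P' : Pt) : Prop :=
  inc P l1 /\ inc P' l2 /\ inc P' (parl P d).

Lemma par_thru_cut_eq d l P Q : ~ par d l -> inc P l -> inc Q l -> inc Q (parl P d) -> Q = P.
Proof.
  intros dl P_ Q_ QP. symmetry. apply (point_eq (parl P d) l); auto.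
  intro e. apply dl. rewrite <- e. auto using par_sym.
Qed.

Section Projection.
Variable d : Ln.
Local Notation projects := (projects d).

Lemma projects_functional l1 l2 P P' P'' : ~ par d l2 ->
  projects l1 l2 P P' -> projects l1 l2 P P'' -> P'' = P'.
Proof.
  intros d2 [P_ [P'_ PP']] [_ [P''_ PP'']]. apply (par_thru_cut_eq d l2); auto.
  apply (par_thru_trans P); auto.
Qed.

Lemma projects_injective l1 l2 P Q P' : ~ par d l1 ->
  projects l1 l2 P P' -> projects l1 l2 Q P' -> Q = P.
Proof.
  intros d1 [P_ [P'_ PP']] [Q_ [_ QP']]. apply (par_thru_cut_eq d l1); auto.
  apply (par_thru_trans P'); apply par_thru_sym; auto.
Qed.

Lemma projects_fixed l1 l2 O O' : ~ par d l2 -> inc O l1 -> inc O l2 ->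
  projects l1 l2 O O' -> O' = O.
Proof. intros d2 O1 O2 [_ [O'_ OO']]. apply (par_thru_cut_eq d l2); auto. Qed.

Lemma projects_meet l1 l2 P : ~ par d l2 -> inc P l1 -> projects l1 l2 P (meet l2 (parl P d)).
Proof.
  intros d2 P_.
  assert (np : ~ par l2 (parl P d)).
  { intro p. apply d2. apply par_sym, (par_trans _ (parl P d)); auto. }
  destruct (meet_spec _ _ np). repeat split; auto.
Qed.

Lemma projects_trans l1 l2 l3 P P2 P3 :
  projects l1 l2 P P2 -> projects l2 l3 P2 P3 -> projects l1 l3 P P3.
Proof.
  intros [P_ [P2_ PP2]] [_ [P3_ P2P3]]. repeat split; auto.
  rewrite <- (par_thru_same P P2); auto.
Qed.

Lemma projects_lift l1 l2 l3 P P2 P3 :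
  projects l1 l2 P P2 -> projects l1 l3 P P3 -> projects l2 l3 P2 P3.
Proof. intros [_ [P2_ PP2]] [_ [P3_ PP3]]. repeat split; auto. apply (par_thru_trans P); auto. Qed.

End Projection.

Section ConcurrentProjection.
Variables (d : Ln) (O I I' : Pt).
Hypotheses (OI : O <> I) (I'_ : ~ inc I' (line O I)).
Hypotheses (d1 : ~ par d (line O I)) (d2 : ~ par d (line O I')).
Hypothesis RI : projects d (line O I) (line O I') I I'.
Local Notation l1 := (line O I).
Local Notation l2 := (line O I').
Local Notation projects := (projects d l1 l2).

Lemma concurrent_OI' : O <> I'.
Proof. distinct. Qed.

Local Hint Resolve concurrent_OI' : core.

Lemma concurrent_lines_neq : l1 <> l2.
Proof. intro e. apply I'_. rewrite e. auto. Qed.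

Lemma concurrent_projects_O : projects O O.
Proof. repeat split; auto. Qed.

Lemma concurrent_not_inc X X' : projects X X' -> X <> O -> ~ inc X' l1.
Proof.
  intros RX XO X'_. apply XO.
  assert (e : X' = O) by (apply (point_eq l1 l2); auto using concurrent_lines_neq; apply RX).
  rewrite e in RX. apply (projects_injective d l1 l2 O X O); auto using concurrent_projects_O.
Qed.

Lemma concurrent_pivot X X' : projects X X' -> X' = mul_pivot O I I' X.
Proof.
  intros [X_ [X'_ XX']]. apply pivot_unique; auto.
  assert (II' : I <> I') by distinct.
  rewrite (par_thru_compat X _ d); auto.
  apply line_par_of_par_thru; auto. apply RI.
Qed.

Lemma concurrent_pivot_not_inc Q X : ~ inc Q l1 -> ~ inc Q l2 -> inc X l1 -> X <> O ->
  ~ inc (mul_pivot O I Q X) l2.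
Proof.
  intros Ql1 Ql2 X_ XO. assert (OQ : O <> Q) by distinct.
  apply (not_inc_of_meet (line O Q) l2 O); auto using pivot_inc_line, pivot_neq_O.
  apply line_neq_of_not_inc; auto.
Qed.

Lemma concurrent_mul_with_image Q X X' Y Y' : ~ inc Q l1 -> ~ inc Q l2 ->
  projects X X' -> projects Y Y' -> X <> O -> Y <> O ->
  mul_with O I' Q X' Y' = mul_pivot O I Y' X.
Proof.
  intros Ql1 Ql2 RX RY XO YO.
  pose proof RX as [X_ [X'_ _]]. pose proof RY as [_ [Y'_ _]].
  assert (Y'l : ~ inc Y' l1) by (apply (concurrent_not_inc Y); auto).
  assert (OY' : O <> Y') by distinct. assert (OQ : O <> Q) by distinct.
  assert (QY' : Q <> Y') by distinct. assert (I'Q : I' <> Q) by distinct.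
  set (Q1 := mul_pivot O I Q X). set (D := mul_pivot O I Y' X).
  assert (Q1l2 : ~ inc Q1 l2) by (apply concurrent_pivot_not_inc; auto).
  assert (Q1D : Q1 <> D) by (intro e; apply QY', (pivot_inj O I OI X); auto).
  (* X' is the pivot of X w.r.t. I', so Q1 is also the pivot of X' in the frame O I' *)
  apply (mul_with_unique O I' concurrent_OI' Q X' Y' Q1 D); auto.
  - apply pivot_inc_line; auto.
  - apply par_thru_of_line_par; [distinct|]. rewrite (concurrent_pivot X X' RX).
    apply par_sym, pivot_par; auto.
  - rewrite (line_unique O Y' l2); auto. apply pivot_inc_line; auto.
  - apply par_thru_of_line_par; auto.
    rewrite (line_sym Y' Q); auto. apply par_sym, pivot_par; auto.
Qed.

Lemma concurrent_projects_pivot Q X Y Y' : ~ inc Q l1 -> ~ inc Q l2 ->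
  inc X l1 -> X <> O -> projects Y Y' -> Y <> O ->
  projects (mul_with O I Q X Y) (mul_pivot O I Y' X).
Proof.
  intros Ql1 Ql2 X_ XO RY YO. pose proof RY as [Y_ [Y'_ YY']].
  assert (Y'l : ~ inc Y' l1) by (apply (concurrent_not_inc Y); auto).
  assert (OY' : O <> Y') by distinct. assert (OQ : O <> Q) by distinct.
  set (C := mul_with O I Q X Y). set (Q1 := mul_pivot O I Q X). set (D := mul_pivot O I Y' X).
  assert (C_ : inc C l1) by (apply mul_with_inc; auto).
  assert (CO : C <> O) by (apply mul_with_neq_O; auto).
  assert (Cl2 : ~ inc C l2) by (apply (not_inc_of_meet l1 l2 O); auto using concurrent_lines_neq).
  assert (Q1_ : inc Q1 (line O Q)) by (apply pivot_inc_line; auto).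
  assert (Q1O : Q1 <> O) by (apply pivot_neq_O; auto).
  assert (Q1l : ~ inc Q1 l1) by (apply pivot_not_inc; auto).
  assert (DO : D <> O) by (apply pivot_neq_O; auto).
  assert (D_ : inc D l2) by (rewrite (line_unique O Y' l2); auto; apply pivot_inc_line; auto).
  repeat split; auto. apply par_thru_of_line_par; [distinct|].
  apply (par_trans _ (line Y Y')); [|apply line_par_of_par_thru; auto; distinct].
  apply par_sym.
  (* triangles Y Q Y' and C Q1 D are in perspective from O *)
  apply (desargues_central O l1 (line O Q) l2 Y Q Y' C Q1 D); auto.
  - apply not_eq_sym, line_neq_of_not_inc; auto.
  - intro e. apply Ql2. rewrite <- e. auto.
  - apply concurrent_lines_neq.
  - rewrite (line_sym C Q1); [|distinct].
    apply par_sym, line_par_of_par_thru; [apply mul_with_inc_dir; auto | distinct].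
  - apply pivot_par; auto. distinct.
Qed.

Lemma concurrent_mul_nz X X' Y Y' : projects X X' -> projects Y Y' -> X <> O -> Y <> O ->
  projects (mul Pi O I X Y) (mul Pi O I' X' Y').
Proof.
  intros RX RY XO YO.
  pose proof RX as [X_ [X'_ _]]. pose proof RY as [Y_ [Y'_ _]].
  assert (I2 : ~ inc I l2) by (apply (not_inc_of_meet l1 l2 O); auto using concurrent_lines_neq).
  assert (np : ~ par l1 l2) by (apply (not_par_of_meet _ _ O); auto using concurrent_lines_neq).
  destruct (exists_not_inc2 l1 l2 I I') as [Q [Ql1 Ql2]]; auto.
  rewrite (mul_eq_mul_with_any O I OI Q), (mul_eq_mul_with_any O I' concurrent_OI' Q),
    (concurrent_mul_with_image Q X X' Y Y'); auto.
  apply concurrent_projects_pivot; auto.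
Qed.

Lemma concurrent_mul X X' Y Y' : projects X X' -> projects Y Y' ->
  projects (mul Pi O I X Y) (mul Pi O I' X' Y').
Proof.
  intros RX RY. pose proof RX as [X_ [X'_ _]]. pose proof RY as [Y_ [Y'_ _]].
  destruct (classic (X = O)) as [-> | XO].
  { rewrite (projects_fixed d l1 l2 O X'), !mul_0l; auto using concurrent_projects_O. }
  destruct (classic (Y = O)) as [-> | YO].
  { rewrite (projects_fixed d l1 l2 O Y'), !mul_0r; auto using concurrent_projects_O. }
  apply concurrent_mul_nz; auto.
Qed.

End ConcurrentProjection.

Section ParallelProjection.
Variables (d : Ln) (O I O' : Pt).
Hypotheses (OI : O <> I) (O'_ : ~ inc O' (line O I)).
Hypotheses (d1 : ~ par d (line O I)) (dir : par (line O O') d).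
Local Notation l1 := (line O I).
Local Notation l2 := (parl O' (line O I)).
Local Notation axis := (line O O').
Local Notation t := (translate O O').
Local Notation projects := (projects d l1 l2).

Lemma parallel_OO' : O <> O'.
Proof. distinct. Qed.

Local Hint Resolve parallel_OO' : core.

Lemma parallel_d2 : ~ par d l2.
Proof. intro p. apply d1. apply (par_trans _ l2); auto. Qed.

Lemma parallel_not_inc_axis P : inc P l1 -> P <> O -> ~ inc P axis.
Proof.
  intros P_ PO. apply (not_inc_of_meet l1 axis O); auto.
  intro e. apply O'_. rewrite e. auto.
Qed.

Lemma parallel_projects_translate P : inc P l1 -> P <> O -> projects P (t P).
Proof.
  intros P_ PO. pose proof (parallel_not_inc_axis P P_ PO) as Pa.
  assert (E : line O P = l1) by (symmetry; apply line_unique; auto).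
  repeat split; auto.
  - rewrite <- E. apply translate_inc_image; auto.
  - rewrite <- (par_thru_compat P axis d); auto. apply translate_inc_dir; auto.
Qed.

Lemma parallel_translate P P' : inc P l1 -> P <> O -> projects P P' -> P' = t P.
Proof.
  intros P_ PO RP. apply (projects_functional d l1 l2 P); auto using parallel_d2.
  apply parallel_projects_translate; auto.
Qed.

Lemma parallel_projects_O : projects O O'.
Proof.
  repeat split; auto. rewrite (par_thru_compat O d axis), par_thru_self; auto using par_sym.
Qed.

Lemma parallel_O'_neq_tI : O' <> t I.
Proof. apply translate_neq_O', parallel_not_inc_axis; auto. Qed.

Lemma parallel_image_line : l2 = line O' (t I).
Proof.
  apply line_unique; auto using parallel_O'_neq_tI.
  apply parallel_projects_translate; auto.
Qed.

Lemma parallel_mul_nz X Y : inc X l1 -> X <> O -> inc Y l1 -> Y <> O ->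
  projects (mul Pi O I X Y) (mul Pi O' (t I) (t X) (t Y)).
Proof.
  intros X_ XO Y_ YO.
  assert (IO : I <> O) by auto.
  assert (np : ~ par l1 axis).
  { apply (not_par_of_meet _ _ O); auto. intro e. apply O'_. rewrite e. auto. }
  destruct (exists_not_inc2 l1 axis I O') as [Q [Ql Qa]]; auto using parallel_not_inc_axis.
  pose proof parallel_image_line as E2.
  assert (tQ : ~ inc (t Q) (line O' (t I))).
  { rewrite <- E2. apply translate_not_inc_par; auto using parallel_not_inc_axis. }
  assert (image : forall P, inc P l1 -> P <> O -> inc (t P) (line O' (t I))).
  { intros P P_ PO. rewrite <- E2. apply parallel_projects_translate; auto. }
  rewrite (mul_eq_mul_with_any O I OI Q), (mul_eq_mul_with_any O' (t I) parallel_O'_neq_tI (t Q));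
    auto.
  rewrite <- translate_mul_with; auto using parallel_not_inc_axis.
  apply parallel_projects_translate; auto using mul_with_inc, mul_with_neq_O.
Qed.

Lemma parallel_mul X X' Y Y' : projects X X' -> projects Y Y' ->
  projects (mul Pi O I X Y) (mul Pi O' (t I) X' Y').
Proof.
  intros RX RY. pose proof RX as [X_ [X'_ _]]. pose proof RY as [Y_ [Y'_ _]].
  rewrite parallel_image_line in X'_, Y'_.
  assert (fixO : forall P', projects O P' -> P' = O').
  { intros P' RP.
    apply (projects_functional d l1 l2 O); auto using parallel_d2, parallel_projects_O. }
  destruct (classic (X = O)) as [-> | XO].
  { rewrite (fixO X'), !mul_0l; auto using parallel_projects_O, parallel_O'_neq_tI. }
  destruct (classic (Y = O)) as [-> | YO].
  { rewrite (fixO Y'), !mul_0r; auto using parallel_projects_O, parallel_O'_neq_tI. }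
  rewrite (parallel_translate X X'), (parallel_translate Y Y'); auto.
  apply parallel_mul_nz; auto.
Qed.

End ParallelProjection.

Lemma projects_mul_same_line d O I O' I' X X' Y Y' : O <> I -> ~ par d (line O I) ->
  projects d (line O I) (line O I) O O' -> projects d (line O I) (line O I) I I' ->
  projects d (line O I) (line O I) X X' -> projects d (line O I) (line O I) Y Y' ->
  projects d (line O I) (line O I) (mul Pi O I X Y) (mul Pi O' I' X' Y').
Proof.
  set (l := line O I). intros OI d1 RO RI RX RY.
  pose proof RX as [X_ _]. pose proof RY as [Y_ _].
  rewrite (projects_fixed d l l O O'), (projects_fixed d l l I I'), (projects_fixed d l l X X'),
    (projects_fixed d l l Y Y'); try apply line_spec; auto.
  repeat split; auto using mul_inc.
Qed.

Lemma projects_mul_through_O d O I I' X X' Y Y' l2 :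
  O <> I -> inc O l2 -> ~ par d (line O I) -> ~ par d l2 ->
  projects d (line O I) l2 I I' -> projects d (line O I) l2 X X' ->
  projects d (line O I) l2 Y Y' ->
  projects d (line O I) l2 (mul Pi O I X Y) (mul Pi O I' X' Y').
Proof.
  intros OI O2 d1 d2 RI RX RY.
  destruct (classic (l2 = line O I)) as [-> | l12].
  { apply projects_mul_same_line; auto. repeat split; auto. }
  pose proof RI as [I_ [I'_ _]].
  assert (I'l : ~ inc I' (line O I)).
  { intro H. apply OI. apply (projects_injective d (line O I) l2 I O I'); auto.
    rewrite (point_eq l2 (line O I) I' O); auto. repeat split; auto. }
  assert (E : l2 = line O I') by (apply line_unique; auto; distinct).
  subst l2. apply concurrent_mul; auto.
Qed.

Lemma projects_mul_parallel d O I O' I' X X' Y Y' l2 :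
  O <> I -> par (line O I) l2 -> ~ par d (line O I) -> ~ par d l2 ->
  projects d (line O I) l2 O O' -> projects d (line O I) l2 I I' ->
  projects d (line O I) l2 X X' -> projects d (line O I) l2 Y Y' ->
  projects d (line O I) l2 (mul Pi O I X Y) (mul Pi O' I' X' Y').
Proof.
  intros OI p12 d1 d2 RO RI RX RY.
  destruct (classic (l2 = line O I)) as [-> | l12]; [apply projects_mul_same_line; auto|].
  pose proof RO as [O_ [O'_ OO']].
  assert (O'l : ~ inc O' (line O I)) by (apply (not_inc_of_par l2 (line O I)); auto using par_sym).
  assert (OO'' : O <> O') by distinct.
  assert (dir : par (line O O') d) by (apply line_par_of_par_thru; auto).
  assert (E : l2 = parl O' (line O I)) by (apply par_thru_unique; auto using par_sym).
  subst l2. rewrite (parallel_translate d O I O' OI O'l d1 dir I I'); auto.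
  apply parallel_mul; auto.
Qed.

Lemma projects_mul d O I O' I' X X' Y Y' l2 :
  O <> I -> ~ par d (line O I) -> ~ par d l2 ->
  projects d (line O I) l2 O O' -> projects d (line O I) l2 I I' ->
  projects d (line O I) l2 X X' -> projects d (line O I) l2 Y Y' ->
  projects d (line O I) l2 (mul Pi O I X Y) (mul Pi O' I' X' Y').
Proof.
  intros OI d1 d2 RO RI RX RY.
  pose proof RI as [I_ _]. pose proof RX as [X_ _]. pose proof RY as [Y_ _].
  (* factor through the parallel l3 to l2 passing through O *)
  set (l3 := parl O l2).
  assert (O3 : inc O l3) by apply par_thru_inc.
  assert (p32 : par l3 l2) by apply par_thru_par.
  assert (d3 : ~ par d l3) by (intro p; apply d2, (par_trans _ l3); auto).
  set (pr := fun P => meet l3 (parl P d)).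
  assert (R3 : forall P, inc P (line O I) -> projects d (line O I) l3 P (pr P))
    by (intros; apply projects_meet; auto).
  assert (RO3 : projects d (line O I) l3 O O) by (repeat split; auto).
  assert (I3O : pr I <> O).
  { intro e. pose proof (R3 I I_) as RI3. rewrite e in RI3.
    apply OI. symmetry. apply (projects_injective d (line O I) l3 O I O); auto. }
  assert (E3 : l3 = line O (pr I)) by (apply line_unique; auto; apply R3; auto).
  apply (projects_trans d _ l3 _ _ (mul Pi O (pr I) (pr X) (pr Y))).
  - apply projects_mul_through_O; auto.
  - rewrite E3. apply projects_mul_parallel; try rewrite <- E3; auto.
    + apply (projects_lift d (line O I) l3 l2 O); auto.
    + apply (projects_lift d (line O I) l3 l2 I); auto.
    + apply (projects_lift d (line O I) l3 l2 X); auto.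
    + apply (projects_lift d (line O I) l3 l2 Y); auto.
Qed.

Lemma parallel_projection_projects l1 l2 f : parallel_projection Pi l1 l2 f ->
  exists d, ~ par d l1 /\ ~ par d l2 /\ forall P, inc P l1 -> projects d l1 l2 P (f P).
Proof.
  intros [d [d1 [d2 Hf]]]. exists d. split; [|split]; auto.
  intros P P_. destruct (Hf P P_) as [fP_ [m [Pm [fPm md]]]].
  repeat split; auto. rewrite <- (par_thru_unique P d m); auto.
Qed.

Section ParallelProjectionMap.
Variables (O I : Pt) (l2 : Ln) (f : Pt -> Pt).
Hypotheses (OI : O <> I) (Hf : parallel_projection Pi (line O I) l2 f).
Local Notation l1 := (line O I).

Lemma parallel_projection_mul X Y : inc X l1 -> inc Y l1 ->
  f (mul Pi O I X Y) = mul Pi (f O) (f I) (f X) (f Y).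
Proof.
  intros X_ Y_. destruct (parallel_projection_projects _ _ _ Hf) as [d [d1 [d2 R]]].
  apply (projects_functional d l1 l2 (mul Pi O I X Y)); auto using mul_inc.
  apply projects_mul; auto.
Qed.

Lemma parallel_projection_inj P Q : inc P l1 -> inc Q l1 -> f P = f Q -> P = Q.
Proof.
  intros P_ Q_ e. destruct (parallel_projection_projects _ _ _ Hf) as [d [d1 [d2 R]]].
  apply (projects_injective d l1 l2 Q P (f Q)); auto. rewrite <- e. auto.
Qed.

Lemma parallel_projection_image_line : line (f O) (f I) = l2.
Proof.
  destruct (parallel_projection_projects _ _ _ Hf) as [d [d1 [d2 R]]].
  symmetry. apply line_unique; [|apply R; auto ..].
  intro e. apply OI, parallel_projection_inj; auto.
Qed.

Lemma parallel_projection_inv B : inc B l1 -> B <> O ->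
  f (inv Pi O I B) = inv Pi (f O) (f I) (f B).
Proof.
  intros B_ BO. destruct (inv_spec O I OI B B_ BO) as [Bi_ [BBi _]].
  destruct (parallel_projection_projects _ _ _ Hf) as [d [d1 [d2 R]]].
  assert (fOI : f O <> f I) by (intro e; apply OI, parallel_projection_inj; auto).
  apply inv_unique; auto; rewrite ?parallel_projection_image_line.
  - apply R; auto.
  - intro e. apply BO, parallel_projection_inj; auto.
  - apply R; auto.
  - rewrite <- parallel_projection_mul, BBi; auto.
Qed.

End ParallelProjectionMap.

End Plane.

Theorem mainTheorem9 (Pi : DesarguesAffinePlane) (O I : Point Pi)
  (l2 : Line Pi) (f : Point Pi -> Point Pi) :
  O <> I ->
  parallel_projection Pi (line_thru Pi O I) l2 f ->
  forall A B : Point Pi,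
    inc A (line_thru Pi O I) -> inc B (line_thru Pi O I) -> B <> O ->
    f (ratio Pi O I A B) = ratio Pi (f O) (f I) (f A) (f B).
Proof.
  intros OI Hf A B A_ B_ BO. unfold ratio.
  rewrite (parallel_projection_mul Pi O I l2 f), (parallel_projection_inv Pi O I l2 f); auto.
  apply inv_spec; auto.
Qed.
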